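(* Let $g:(0,\infty)\to(0,\infty)$ be positive and nondecreasing with $\lim_{s\to0}g(s)/s=0$, and set $F(\lambda):=\int_\lambda^1\frac{ds}{g(s)}$ for $0<\lambda\le1$ (so that $F^{-1}:[0,\infty)\to(0,1]$ is well defined, continuous and strictly decreasing). Then for every $k>0$ there exists a constant $C>1$, depending only on $k$ and $g$, such that $$F^{-1}(t-k)\le C\,F^{-1}(t)\qquad\text{for all }t\ge k .$$ *)

From Stdlib Require Import Reals ClassicalEpsilon.
From Coquelicot Require Import Coquelicot.
Open Scope R_scope.

Definition F (g : R -> R) (lam : R) : R := RInt (fun s => / g s) lam 1.

(* F^{-1}(t): the (unique, under the hypotheses of the lemma) lambda in (0,1]
   with F(lambda) = t; chosen by Hilbert epsilon (default 1 if none exists). *)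
Definition Finv (g : R -> R) (t : R) : R :=
  epsilon (inhabits 1) (fun lam => 0 < lam <= 1 /\ F g lam = t).

(* Since [F(F^-1 t) = t], the points [l = F^-1 t] and [m = F^-1 (t - k)] satisfy
   [\int_l^m ds/g(s) = k].  Either [m <= 2 l], or the integral over [[m/2, m]]
   alone gives [m / (2 g(m)) <= k], i.e. [g(m)/m >= 1/(2k)]; as [g(s)/s -> 0]
   this keeps [m] above some [d > 0], hence [t = F(m) + k <= F(d) + k], and as
   [F] blows up at [0] this keeps [l] above some [c > 0].  Then [m <= 1 <= l/c].
   Integrability of [1/g] comes from its monotonicity: a nonincreasing function
   is a uniform limit of nonincreasing functions with finitely many values. *)
From Stdlib Require Import Reals Lra Lia Classical ClassicalEpsilon.
From Coquelicot Require Import Coquelicot.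
Open Scope R_scope.

Lemma ex_RInt_decreasing_flat (f : R -> R) a b :
  a <= b -> decreasing f -> f b = f a -> ex_RInt f a b.
Proof.
  intros Hab f_decr Hfab.
  apply (ex_RInt_ext (fun _ => f a)); [|apply ex_RInt_const].
  intros x Hx. rewrite Rmin_left, Rmax_right in Hx by lra.
  assert (f x <= f a) by (apply f_decr; lra).
  assert (f b <= f x) by (apply f_decr; lra).
  lra.
Qed.

Lemma lattice_lt_le_pred (eps : R) (m n : Z) :
  0 < eps -> IZR m * eps < IZR n * eps -> IZR m * eps <= IZR n * eps - eps.
Proof.
  intros Heps Hlt.
  assert (Hmn : (m + 1 <= n)%Z).
  { cut (m < n)%Z; [lia|]. apply lt_IZR, (Rmult_lt_reg_r eps); lra. }
  apply IZR_le in Hmn. rewrite plus_IZR in Hmn. nra.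
Qed.

(* Induction on the number [N] of levels [eps Z] that [f] crosses on [[a, b]]:
   [f] equals [f a] up to [c = sup {x | f x = f a}] and, beyond [c], coincides
   with [min f (f a - eps)], which crosses one level less. *)
Lemma ex_RInt_decreasing_lattice (eps : R) (N : nat) :
  0 < eps -> forall (f : R -> R) a b, a <= b -> decreasing f ->
  (forall x, exists z, f x = IZR z * eps) ->
  f a - f b <= INR N * eps -> ex_RInt f a b.
Proof.
  intros Heps. induction N as [|N IH]; intros f a b Hab Hf Hlat Hlevels.
  { apply ex_RInt_decreasing_flat; auto.
    assert (f b <= f a) by (apply Hf; lra). simpl in Hlevels. lra. }
  destruct (Req_dec (f b) (f a)) as [Hflat|Hdrop].
  { now apply ex_RInt_decreasing_flat. }
  assert (Hgap : forall x y, f y < f x -> f y <= f x - eps).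
  { intros x y. destruct (Hlat x) as [zx ->], (Hlat y) as [zy ->].
    apply lattice_lt_le_pred; lra. }
  assert (Hfb : f b <= f a - eps).
  { apply Hgap. assert (f b <= f a) by (apply Hf; lra). lra. }
  set (E := fun x => a <= x <= b /\ f x = f a).
  destruct (completeness E) as [c [Hub Hlub]].
  { exists b. intros x [Hx _]. lra. }
  { exists a. split; [lra | reflexivity]. }
  assert (Hac : a <= c) by (apply Hub; split; [lra | reflexivity]).
  assert (Hcb : c <= b) by (apply Hlub; intros x [Hx _]; lra).
  apply ex_RInt_Chasles with c.
  - apply (ex_RInt_ext (fun _ => f a)); [|apply ex_RInt_const].
    intros x Hx. rewrite Rmin_left, Rmax_right in Hx by lra.
    assert (Hy : exists y, E y /\ x < y).
    { apply NNPP. intros Hno.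
      assert (c <= x).
      { apply Hlub. intros y Hy. apply Rnot_lt_le. intros Hxy.
        apply Hno. now exists y. }
      lra. }
    destruct Hy as [y [[Hy Hfy] Hxy]].
    assert (f y <= f x) by (apply Hf; lra).
    assert (f x <= f a) by (apply Hf; lra).
    lra.
  - apply (ex_RInt_ext (fun x => Rmin (f x) (f a - eps))).
    + intros x Hx. rewrite Rmin_left, Rmax_right in Hx by lra.
      apply Rmin_left, Hgap.
      assert (f x <> f a).
      { intros Heq. assert (x <= c) by (apply Hub; split; [lra | exact Heq]). lra. }
      assert (f x <= f a) by (apply Hf; lra).
      lra.
    + apply IH; [lra | | |].
      * intros x y Hxy. assert (f y <= f x) by (apply Hf; lra).
        apply Rle_min_compat_r; lra.
      * intros x. unfold Rmin. destruct Rle_dec; [apply Hlat|].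
        destruct (Hlat a) as [za ->]. exists (za - 1)%Z. rewrite minus_IZR. ring.
      * rewrite (Rmin_left (f b)) by lra. rewrite S_INR in Hlevels.
        pose proof (Rmin_r (f c) (f a - eps)). lra.
Qed.

Lemma ex_RInt_uniform_limit (f : R -> R) (h : nat -> R -> R) a b :
  (forall n, ex_RInt (h n) a b) ->
  (forall n x, Rabs (h n x - f x) < / INR (S n)) -> ex_RInt f a b.
Proof.
  intros Hint Herr.
  destruct (filterlim_RInt (V := R_CompleteNormedModule) h a b eventually
              eventually_filter f (fun n => RInt (h n) a b)) as [If [_ HIf]].
  - intros n. apply RInt_correct, Hint.
  - apply filterlim_locally. intros eps.
    pose proof (cond_pos eps) as Heps.
    destruct (INR_unbounded (/ eps)) as [N HN].
    exists N. intros n Hn x. change (Rabs (h n x - f x) < eps).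
    eapply Rlt_le_trans; [apply Herr|].
    rewrite <- (Rinv_inv eps). apply Rinv_le_contravar.
    + apply Rinv_0_lt_compat, Heps.
    + assert (INR N <= INR (S n)) by (apply le_INR; lia). lra.
  - now exists If.
Qed.

Lemma Int_part_le x y : x <= y -> (Int_part x <= Int_part y)%Z.
Proof.
  intros Hxy. destruct (base_Int_part x), (base_Int_part y).
  cut (IZR (Int_part x) < IZR (Int_part y + 1)); [intros Hlt; apply lt_IZR in Hlt; lia|].
  rewrite plus_IZR. lra.
Qed.

Lemma Int_part_scale_error (eps y : R) :
  0 < eps -> Rabs (IZR (Int_part (y / eps)) * eps - y) < eps.
Proof.
  intros Heps. destruct (base_Int_part (y / eps)) as [Hle Hgt].
  replace (IZR (Int_part (y / eps)) * eps - y)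
    with ((IZR (Int_part (y / eps)) - y / eps) * eps) by (field; lra).
  rewrite Rabs_mult, (Rabs_pos_eq eps) by lra.
  rewrite Rabs_left1 by lra. nra.
Qed.

Lemma ex_RInt_decreasing (f : R -> R) a b :
  a <= b -> decreasing f -> ex_RInt f a b.
Proof.
  intros Hab Hf.
  set (e := fun n : nat => / INR (S n)).
  assert (He : forall n, 0 < e n) by (intros n; apply Rinv_0_lt_compat, lt_0_INR; lia).
  set (q := fun n x => IZR (Int_part (f x / e n)) * e n).
  apply (ex_RInt_uniform_limit f q).
  - intros n. pose proof (He n).
    destruct (INR_unbounded ((q n a - q n b) / e n)) as [N HN].
    apply (ex_RInt_decreasing_lattice (e n) N); auto.
    + intros x y Hxy. apply Rmult_le_compat_r; [lra|].
      apply IZR_le, Int_part_le, Rmult_le_compat_r; [|now apply Hf].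
      left. now apply Rinv_0_lt_compat.
    + intros x. now exists (Int_part (f x / e n)).
    + apply Rmult_lt_compat_r with (r := e n) in HN; [|lra].
      unfold Rdiv in HN. rewrite Rmult_assoc, Rinv_l in HN by lra. lra.
  - intros n x. apply Int_part_scale_error, He.
Qed.

Lemma continuous_lipschitz (f : R -> R) (L : R) :
  0 < L -> (forall x y, Rabs (f x - f y) <= L * Rabs (x - y)) ->
  forall x, continuous f x.
Proof.
  intros HL Hlip x. apply filterlim_locally. intros eps.
  assert (Hd : 0 < eps / L) by (apply Rdiv_lt_0_compat; [apply cond_pos | lra]).
  exists (mkposreal _ Hd). intros y Hy. change (Rabs (y - x) < eps / L) in Hy.
  change (Rabs (f y - f x) < eps).
  eapply Rle_lt_trans; [apply Hlip|].
  apply (Rmult_lt_compat_l L) in Hy; [|lra].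
  replace (L * (eps / L)) with (pos eps) in Hy by (field; lra).
  lra.
Qed.

Section InverseIntegral.

Variable g : R -> R.
Hypothesis g_pos : forall s, 0 < s -> 0 < g s.
Hypothesis g_mono : forall s t, 0 < s -> s <= t -> g s <= g t.
Hypothesis g_lim : filterlim (fun s => g s / s) (at_right 0) (locally 0).

Lemma inv_g_le x y : 0 < x -> x <= y -> / g y <= / g x.
Proof.
  intros Hx Hxy. apply Rinv_le_contravar; [apply g_pos | apply g_mono]; lra.
Qed.

(* Clamping the argument to [[x, y]] makes [1/g] globally nonincreasing without changing it there. *)
Lemma ex_RInt_inv_g x y : 0 < x -> 0 < y -> ex_RInt (fun s => / g s) x y.
Proof.
  assert (Hle : forall x y, 0 < x -> x <= y -> ex_RInt (fun s => / g s) x y).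
  { intros a b Ha Hab.
    apply (ex_RInt_ext (fun s => / g (Rmax a (Rmin s b)))).
    - intros s Hs. rewrite Rmin_left, Rmax_right in Hs by lra.
      now rewrite Rmin_left, Rmax_right by lra.
    - apply ex_RInt_decreasing; [exact Hab|]. intros s u Hsu.
      apply inv_g_le; [apply Rlt_le_trans with a; [lra | apply Rmax_l]|].
      apply Rle_max_compat_l, Rle_min_compat_r, Hsu. }
  intros Hx Hy. destruct (Rle_dec x y).
  - now apply Hle.
  - apply ex_RInt_swap, Hle; lra.
Qed.

Lemma F_sub x y : 0 < x -> 0 < y -> F g x - F g y = RInt (fun s => / g s) x y.
Proof.
  intros Hx Hy. unfold F.
  assert (Hc := RInt_Chasles (fun s => / g s) x y 1
                 (ex_RInt_inv_g x y Hx Hy) (ex_RInt_inv_g y 1 Hy Rlt_0_1)).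
  change plus with Rplus in Hc. lra.
Qed.

Lemma RInt_inv_g_lower x y :
  0 < x -> x <= y -> (y - x) * / g y <= RInt (fun s => / g s) x y.
Proof.
  intros Hx Hxy.
  replace ((y - x) * / g y) with (RInt (fun _ => / g y) x y)
    by (rewrite RInt_const; reflexivity).
  apply RInt_le; [exact Hxy | apply ex_RInt_const | apply ex_RInt_inv_g; lra |].
  intros s Hs. apply inv_g_le; lra.
Qed.

Lemma RInt_inv_g_ge0 x y : 0 < x -> x <= y -> 0 <= RInt (fun s => / g s) x y.
Proof.
  intros Hx Hxy. eapply Rle_trans; [|now apply RInt_inv_g_lower].
  apply Rmult_le_pos; [lra|]. left. apply Rinv_0_lt_compat, g_pos. lra.
Qed.

Lemma F_decreasing x y : 0 < x -> x <= y -> F g y <= F g x.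
Proof.
  intros Hx Hxy. pose proof (F_sub x y Hx ltac:(lra)).
  pose proof (RInt_inv_g_ge0 x y Hx Hxy). lra.
Qed.

Lemma F_lipschitz s0 a b :
  0 < s0 -> s0 <= a -> a <= b -> Rabs (F g a - F g b) <= (b - a) * / g s0.
Proof.
  intros Hs0 Ha Hab. rewrite F_sub by lra.
  apply abs_RInt_le_const; [exact Hab | apply ex_RInt_inv_g; lra |].
  intros s Hs. rewrite Rabs_pos_eq.
  - apply inv_g_le; lra.
  - left. apply Rinv_0_lt_compat, g_pos. lra.
Qed.

Lemma continuous_F_clamped s0 : 0 < s0 -> forall x, continuous (fun x => F g (Rmax s0 x)) x.
Proof.
  intros Hs0. apply (continuous_lipschitz _ (/ g s0)).
  { apply Rinv_0_lt_compat, g_pos, Hs0. }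
  intros x y.
  assert (Hmax : Rabs (Rmax s0 x - Rmax s0 y) <= Rabs (x - y)).
  { unfold Rmax. repeat destruct Rle_dec; unfold Rabs; repeat destruct Rcase_abs; lra. }
  assert (Hg : 0 < / g s0) by (apply Rinv_0_lt_compat, g_pos, Hs0).
  eapply Rle_trans; [|rewrite Rmult_comm; apply Rmult_le_compat_r; [lra | exact Hmax]].
  destruct (Rle_dec (Rmax s0 x) (Rmax s0 y)).
  - rewrite (Rabs_minus_sym (Rmax s0 x)), (Rabs_pos_eq (Rmax s0 y - Rmax s0 x)) by lra.
    apply F_lipschitz; [exact Hs0 | apply Rmax_l | exact r].
  - rewrite (Rabs_pos_eq (Rmax s0 x - Rmax s0 y)) by lra.
    rewrite Rabs_minus_sym. apply F_lipschitz; [exact Hs0 | apply Rmax_l | lra].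
Qed.

Lemma g_lt_linear_near_0 M :
  0 < M -> exists d, 0 < d <= 1 /\ forall s, 0 < s < d -> M * g s < s.
Proof.
  intros HM.
  assert (HiM : 0 < / M) by (apply Rinv_0_lt_compat, HM).
  destruct (proj1 (filterlim_locally _ _) g_lim (mkposreal _ HiM)) as [del Hdel].
  pose proof (cond_pos del).
  exists (Rmin del 1). split; [split; [apply Rmin_glb_lt; lra | apply Rmin_r]|].
  intros s [Hs0 Hs]. pose proof (Rmin_l del 1).
  assert (Hball : ball 0 del s).
  { change (Rabs (s - 0) < del). rewrite Rabs_pos_eq; lra. }
  specialize (Hdel s Hball Hs0). change (Rabs (g s / s - 0) < / M) in Hdel.
  rewrite Rminus_0_r in Hdel. apply Rabs_def2 in Hdel as [Hlt _].
  apply (Rmult_lt_compat_l (M * s)) in Hlt; [|nra].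
  replace (M * s * (g s / s)) with (M * g s) in Hlt by (field; lra).
  replace (M * s * / M) with s in Hlt by (field; lra).
  exact Hlt.
Qed.

Lemma ln_ratio_le_RInt_inv_g s d :
  0 < s <= d -> (forall u, s < u < d -> g u <= u) ->
  ln d - ln s <= RInt (fun u => / g u) s d.
Proof.
  intros Hs Hg.
  assert (Hln : is_RInt (fun u => / u) s d (minus (ln d) (ln s))).
  { apply (is_RInt_derive ln); intros x Hx; rewrite Rmin_left, Rmax_right in Hx by lra.
    - apply is_derive_ln. lra.
    - apply continuous_Rinv. lra. }
  change (ln d - ln s) with (minus (ln d) (ln s)).
  rewrite <- (is_RInt_unique _ _ _ _ Hln).
  apply RInt_le; [lra | eexists; exact Hln | apply ex_RInt_inv_g; lra |].
  intros u Hu. apply Rinv_le_contravar; [apply g_pos; lra | now apply Hg].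
Qed.

(* [g(s) < s] near [0] makes [F] grow at least like [-ln s]. *)
Lemma F_le_bounded_away_0 T :
  exists c, 0 < c /\ forall s, 0 < s -> F g s <= T -> c <= s.
Proof.
  destruct (g_lt_linear_near_0 1 Rlt_0_1) as [d [Hd Hgd]].
  exists (Rmin d (exp (ln d - Rabs T))).
  split; [apply Rmin_glb_lt; [lra | apply exp_pos]|].
  intros s Hs HFs. apply Rnot_lt_le. intros Hsc.
  pose proof (Rmin_l d (exp (ln d - Rabs T))).
  pose proof (Rmin_r d (exp (ln d - Rabs T))).
  assert (Hlns : ln s < ln d - Rabs T).
  { rewrite <- (ln_exp (ln d - Rabs T)). apply ln_increasing; lra. }
  assert (Hint : ln d - ln s <= RInt (fun u => / g u) s d).
  { apply ln_ratio_le_RInt_inv_g; [lra|].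
    intros u Hu. rewrite <- (Rmult_1_l (g u)). left. apply Hgd. lra. }
  pose proof (F_sub s d Hs ltac:(lra)).
  assert (0 <= F g d) by (apply RInt_inv_g_ge0; lra).
  pose proof (Rle_abs T). lra.
Qed.

Lemma Finv_spec t : 0 <= t -> 0 < Finv g t <= 1 /\ F g (Finv g t) = t.
Proof.
  intros Ht. unfold Finv. apply epsilon_spec.
  destruct (F_le_bounded_away_0 t) as [c [Hc Hct]].
  set (s0 := Rmin (c / 2) 1).
  assert (Hs0 : 0 < s0 <= 1) by (split; [apply Rmin_glb_lt | apply Rmin_r]; lra).
  assert (HFs0 : t < F g s0).
  { apply Rnot_le_lt. intros HF. pose proof (Hct s0 (proj1 Hs0) HF).
    assert (s0 <= c / 2) by apply Rmin_l. lra. }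
  assert (HF1 : F g 1 = 0) by (unfold F; now rewrite RInt_point).
  destruct (IVT_gen_consistent (fun x => F g (Rmax s0 x)) s0 1 t) as [x [Hx Hxt]].
  - apply continuous_F_clamped. lra.
  - rewrite Rmax_left, Rmax_right, HF1, Rmin_right, Rmax_left by lra. lra.
  - rewrite Rmin_left, Rmax_right in Hx by lra. rewrite Rmax_right in Hxt by lra.
    exists x. split; [lra | exact Hxt].
Qed.

Lemma half_le_RInt_inv_g l m :
  0 < l -> 2 * l <= m -> m <= 2 * g m * RInt (fun s => / g s) l m.
Proof.
  intros Hl Hlm.
  rewrite <- (RInt_Chasles (fun s => / g s) l (m / 2) m) by (apply ex_RInt_inv_g; lra).
  pose proof (RInt_inv_g_ge0 l (m / 2) Hl ltac:(lra)).
  pose proof (RInt_inv_g_lower (m / 2) m ltac:(lra) ltac:(lra)).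
  pose proof (g_pos m ltac:(lra)).
  change plus with Rplus.
  replace m with (2 * g m * ((m - m / 2) * / g m)) at 1 by (field; lra).
  apply Rmult_le_compat_l; lra.
Qed.

End InverseIntegral.

Theorem lemma4p12 (g : R -> R)
  (g_pos : forall s, 0 < s -> 0 < g s)
  (g_mono : forall s t, 0 < s -> s <= t -> g s <= g t)
  (g_lim : filterlim (fun s => g s / s) (at_right 0) (locally 0))
  (k : R) (hk : 0 < k) :
  exists C : R, 1 < C /\
    forall t : R, k <= t -> Finv g (t - k) <= C * Finv g t.
Proof.
  destruct (g_lt_linear_near_0 g g_lim (2 * k) ltac:(lra)) as [d [Hd Hgd]].
  destruct (F_le_bounded_away_0 g g_pos g_mono g_lim (F g d + k)) as [c [Hc Hsublevel]].
  exists (2 + / c). split; [pose proof (Rinv_0_lt_compat c Hc); lra|].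
  intros t Ht.
  destruct (Finv_spec g g_pos g_mono g_lim t ltac:(lra)) as [[Hl0 Hl1] HFl].
  destruct (Finv_spec g g_pos g_mono g_lim (t - k) ltac:(lra)) as [[Hm0 Hm1] HFm].
  set (l := Finv g t) in *. set (m := Finv g (t - k)) in *.
  assert (Hl_c : 0 <= / c * l) by (apply Rmult_le_pos; [left; apply Rinv_0_lt_compat|]; lra).
  destruct (Rle_dec m (2 * l)) as [Hdouble|Hfar]; [nra|].
  assert (Hmk : m <= 2 * g m * k).
  { replace k with (F g l - F g m) by lra. rewrite (F_sub g g_pos g_mono) by lra.
    apply half_le_RInt_inv_g; auto; lra. }
  assert (Hdm : d <= m).
  { apply Rnot_lt_le. intros Hmd. pose proof (Hgd m ltac:(lra)). lra. }
  assert (Hcl : c <= l).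
  { apply Hsublevel; [exact Hl0|]. pose proof (F_decreasing g g_pos g_mono d m ltac:(lra) Hdm). lra. }
  assert (1 <= / c * l).
  { apply (Rmult_le_reg_l c); [exact Hc|]. rewrite <- Rmult_assoc, Rinv_r by lra. lra. }
  nra.
Qed.
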